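(* Suppose a HIRB tree with $n$ items has height $H\ge\log_\beta n$, and let $X$ be the total number of nodes in the HIRB, a random variable over the choice of hash function in initializing the HIRB. Then for any $m\ge 1$, $$\Pr[X\ge H+4n+m]<0.883^m.$$
   Context: HIRB tree: parameters an integer $\beta$ (expected branching factor) and height $H$; labels are hashed by a hash function chosen (salted) at initialization, and each label receives a height $\mathsf{chooseheight}(\mathsf{label})\in\{0,\dots,H\}$ derived pseudorandomly from its hash. The HIRB is a rooted search tree with levels $H$ (root) down to $0$ (leaves), storing items sorted by label hash, such that for each level $\ell$ the nodes at level $\ell$ correspond to the intervals into which the hashes of items of height $>\ell$ partition the hash space, each such node containing exactly the items of height $\ell$ whose hash lies in its interval; a node with $k-1$ items has $k$ children. The empty HIRB is a chain of $H+1$ nodes. Standing assumption (Assumption 1): for any $n$ distinct labels stored in a HIRB, their heights are independent random samples from a geometric distribution with probability $(\beta-1)/\beta$ truncated to $\{0,1,\dots,H\}$ (i.e., $\Pr[\text{height}\ge i]=\beta^{-i}$ for $0\le i\le H$), the randomness coming entirely from the random oracle and random function chosen at creation of the HIRB. *)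

From HB Require Import structures.
From mathcomp Require Import all_boot all_order all_algebra.
Set Implicit Arguments. Unset Strict Implicit. Unset Printing Implicit Defensive.
Import Order.TTheory GRing.Theory Num.Theory.
Local Open Scope ring_scope.

(* Tail of the height distribution (Assumption 1):
   Pr[height >= j] = beta^-j for 0 <= j <= H, and 0 for j > H. *)
Definition height_tail (R : realFieldType) (beta H j : nat) : R :=
  if (j <= H)%N then (beta%:R ^- j) else 0.

(* Probability mass of a single item's height k in {0,...,H}:
   geometric with parameter (beta-1)/beta truncated to {0,..,H}. *)
Definition height_pmf (R : realFieldType) (beta H : nat) (k : 'I_H.+1) : R :=
  height_tail R beta H k - height_tail R beta H k.+1.

(* An outcome of the random choice: the heights of the n stored items
   (item i has height h i). By Assumption 1 these are independent with
   law height_pmf, i.e. the outcome h has probability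
   \prod_i height_pmf (h i). *)
Definition hirb_prob (R : realFieldType) (beta n H : nat)
  (E : pred {ffun 'I_n -> 'I_H.+1}) : R :=
  \sum_(h : {ffun 'I_n -> 'I_H.+1} | E h) \prod_(i < n) @height_pmf R beta H (h i).

Definition separators (n H : nat) (h : {ffun 'I_n -> 'I_H.+1}) (l : 'I_H.+1)
  : {set 'I_n} := [set i | (l < h i)%N].

(* Nodes at level l = intervals into which the (distinct) hashes of the
   separators partition the hash space: #separators + 1. *)
Definition nodes_at_level (n H : nat) (h : {ffun 'I_n -> 'I_H.+1}) (l : 'I_H.+1)
  : nat := (#|separators h l|).+1.

(* Total number of nodes of the HIRB over levels H (root) ... 0 (leaves). *)
Definition hirb_nodes (n H : nat) (h : {ffun 'I_n -> 'I_H.+1}) : nat :=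
  (\sum_(l < H.+1) nodes_at_level h l)%N.

Arguments height_tail R beta H j : clear implicits.
Arguments height_pmf R beta H k : clear implicits.
Arguments hirb_prob R beta n H E : clear implicits.

(** The number of nodes at level [l] is one more than the number of items
    of height greater than [l], so summing over the levels gives
    [X = H + 1 + S], where [S] is the sum of the [n] independent heights.
    A Chernoff bound with base [6/5] gives
    [Pr[S >= k] <= (5/6)^k E[(6/5)^h]^n], and for [beta >= 2] the moment
    generating value [E[(6/5)^h]] of one (truncated geometric) height is at
    most [(1/2)/(1 - 3/5) = 5/4].  With [k = 4n + m - 1] this is
    [(6/5) (3125/5184)^n (5/6)^m < 0.883^m]. *)

From HB Require Import structures.
From mathcomp Require Import all_boot all_order all_algebra.
From mathcomp Require Import zify ring lra.
Set Implicit Arguments.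
Unset Strict Implicit.
Unset Printing Implicit Defensive.
Import Order.TTheory GRing.Theory Num.Theory.
Local Open Scope ring_scope.

Lemma sum_ord_ltn (N k : nat) : (\sum_(l < N) (l < k) = minn k N)%N.
Proof.
elim: N => [|N IHN]; first by rewrite big_ord0; lia.
by rewrite big_ord_recr /= IHN; case: ltnP => /=; lia.
Qed.

Lemma card_separators (n H : nat) (h : {ffun 'I_n -> 'I_H.+1}) (l : 'I_H.+1) :
  #|separators h l| = (\sum_i (l < h i))%N.
Proof. by rewrite -sum1dep_card big_mkcond. Qed.

Lemma hirb_nodesE (n H : nat) (h : {ffun 'I_n -> 'I_H.+1}) :
  hirb_nodes h = (H.+1 + \sum_i h i)%N.
Proof.
rewrite /hirb_nodes /nodes_at_level.
rewrite (eq_bigr (fun l : 'I_H.+1 => \sum_i (l < h i) + 1)%N); last first.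
  by move=> l _; rewrite card_separators addn1.
rewrite big_split /= sum_nat_const card_ord muln1 addnC exchange_big /=.
congr (_ + _)%N; apply: eq_bigr => i _.
by rewrite sum_ord_ltn; apply/minn_idPl/ltnW.
Qed.

Section Chernoff.

Variable R : realFieldType.

Lemma markov_exp (I : finType) (w : I -> R) (F : I -> nat) (t : R) (k : nat) :
  (forall x, 0 <= w x) -> 1 <= t ->
  t ^+ k * \sum_(x | (k <= F x)%N) w x <= \sum_x w x * t ^+ F x.
Proof.
move=> w_ge0 t_ge1.
have t_ge0 : 0 <= t by lra.
rewrite mulr_sumr [leRHS](bigID (fun x => k <= F x)%N) /= -[leLHS]addr0.
apply: lerD; last by apply: sumr_ge0 => x _; rewrite mulr_ge0 ?exprn_ge0.
apply: ler_sum => x kF; rewrite mulrC ler_wpM2l //.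
exact: ler_weXn2l.
Qed.

Lemma sum_prod_exp (T : finType) (n : nat) (p : T -> R) (f : T -> nat) (t : R) :
  \sum_(h : {ffun 'I_n -> T}) (\prod_i p (h i)) * t ^+ (\sum_i f (h i))
    = (\sum_x p x * t ^+ f x) ^+ n.
Proof.
transitivity (\prod_(i < n) \sum_x p x * t ^+ f x).
  by rewrite bigA_distr_bigA; apply: eq_bigr => h _; rewrite big_split /= prodrXr.
by rewrite prodr_const card_ord.
Qed.

Lemma chernoff_sum (T : finType) (n : nat) (p : T -> R) (f : T -> nat) (t : R) k :
  (forall x, 0 <= p x) -> 1 <= t ->
  t ^+ k * \sum_(h : {ffun 'I_n -> T} | (k <= \sum_i f (h i))%N) \prod_i p (h i)
    <= (\sum_x p x * t ^+ f x) ^+ n.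
Proof.
move=> p_ge0 t_ge1; rewrite -sum_prod_exp.
by apply: markov_exp => // h; apply: prodr_ge0.
Qed.

End Chernoff.

(* The slack [(qt)^N / 4] makes the induction go through: with [t = 6/5]
   one step changes the left-hand side by [(qt)^N (q/2 - 1/4) <= 0]. *)
Lemma truncated_geometric_mgf_le_aux (R : realFieldType) (q : R) (N : nat) :
  0 <= q -> q <= 1/2 ->
  \sum_(j < N) (q ^+ j - q ^+ j.+1) * (6/5) ^+ j + (q * (6/5)) ^+ N
    + 1/4 * (q * (6/5)) ^+ N <= 5/4.
Proof.
move=> q_ge0 q_le; elim: N => [|N IHN]; first by rewrite big_ord0 expr0; lra.
rewrite big_ord_recr /= !exprS.
move: IHN; set S := \sum_(_ < _) _; set a := (q * (6/5)) ^+ N => IHN.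
have a_ge0 : 0 <= a by rewrite exprn_ge0 // mulr_ge0 //; lra.
have -> : (q ^+ N - q * q ^+ N) * (6/5) ^+ N = a * (1 - q).
  by rewrite /a [in RHS]exprMn; ring.
have slack : 0 <= 1/4 - q/2 by lra.
have := mulr_ge0 a_ge0 slack; nra.
Qed.

Lemma truncated_geometric_mgf_le (R : realFieldType) (q : R) (N : nat) :
  0 <= q -> q <= 1/2 ->
  \sum_(j < N) (q ^+ j - q ^+ j.+1) * (6/5) ^+ j + (q * (6/5)) ^+ N <= 5/4.
Proof.
move=> q_ge0 q_le; have := truncated_geometric_mgf_le_aux N q_ge0 q_le.
have : 0 <= (q * (6/5)) ^+ N by rewrite exprn_ge0 // mulr_ge0 //; lra.
lra.
Qed.

Section HeightDistribution.

Variables (R : realFieldType) (beta H : nat).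
Hypothesis beta_gt1 : (1 < beta)%N.

Let q : R := beta%:R^-1.

Lemma inv_beta_ge0 : 0 <= q.
Proof. by rewrite invr_ge0 ler0n. Qed.

Lemma inv_beta_le_half : q <= 1/2.
Proof.
have beta_ge2 : (2 : R) <= beta%:R by rewrite (ler_nat R 2).
by rewrite mul1r lef_pV2 ?posrE //; lra.
Qed.

Lemma height_tailE j : height_tail R beta H j = if (j <= H)%N then q ^+ j else 0.
Proof. by rewrite /height_tail exprVn. Qed.

Lemma height_pmf_lt (j : 'I_H.+1) : (j < H)%N ->
  height_pmf R beta H j = q ^+ j - q ^+ j.+1.
Proof. by move=> jH; rewrite /height_pmf !height_tailE ltnW // jH. Qed.

Lemma height_pmf_max : height_pmf R beta H ord_max = q ^+ H.
Proof. by rewrite /height_pmf !height_tailE /= leqnn ltnn subr0. Qed.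

Lemma height_pmf_ge0 j : 0 <= height_pmf R beta H j.
Proof.
have [jH|Hj] := ltnP j H; last first.
  have -> : j = ord_max by apply/val_inj => /=; have := ltn_ord j; lia.
  by rewrite height_pmf_max exprn_ge0 ?inv_beta_ge0.
rewrite height_pmf_lt // exprS subr_ge0 -[leRHS]mul1r ler_wpM2r ?exprn_ge0
  ?inv_beta_ge0 //.
by have := inv_beta_le_half; lra.
Qed.

Lemma height_mgf_le : \sum_j height_pmf R beta H j * (6/5) ^+ j <= 5/4.
Proof.
rewrite big_ord_recr /= height_pmf_max -exprMn.
rewrite (eq_bigr (fun j : 'I_H => (q ^+ j - q ^+ j.+1) * (6/5) ^+ j)); last first.
  by move=> j _; rewrite height_pmf_lt //=; exact: ltn_ord.
by apply: truncated_geometric_mgf_le; [exact: inv_beta_ge0 | exact: inv_beta_le_half].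
Qed.

End HeightDistribution.

Lemma chernoff_numeric_lt (R : realFieldType) (n m : nat) : (0 < n)%N ->
  (5/6 : R) ^+ (4 * n + m)%N.-1 * (5/4) ^+ n < (883%:R / 1000%:R) ^+ m.
Proof.
case: n => // n _.
have -> : (4 * n.+1 + m).-1 = (4 * n + 3 + m)%N by lia.
have -> : (5/6 : R) ^+ (4 * n + 3 + m)%N * (5/4) ^+ n.+1
    = ((5/6) ^+ 4 * (5/4)) ^+ n * ((5/6) ^+ 3 * (5/4)) * (5/6) ^+ m.
  by rewrite [in RHS]exprMn -exprM -addnA !exprD (exprSr (5/4 : R)); ring.
have c_ge0 : (0 : R) <= (5/6) ^+ 4 * (5/4) by rewrite mulr_ge0 ?exprn_ge0 //; lra.
have c_le1 : (5/6 : R) ^+ 4 * (5/4) <= 1 by rewrite !exprS expr0; lra.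
have d_lt1 : (5/6 : R) ^+ 3 * (5/4) < 1 by rewrite !exprS expr0; lra.
have r_gt0 : (0 : R) < (5/6) ^+ m by rewrite exprn_gt0 //; lra.
have r_le : (5/6 : R) ^+ m <= (883%:R / 1000%:R) ^+ m.
  by rewrite lerXn2r ?nnegrE //; lra.
apply: lt_le_trans r_le; rewrite -[ltRHS]mul1r ltr_pM2r //.
apply: le_lt_trans d_lt1; rewrite ler_piMl ?exprn_ile1 //.
by rewrite mulr_ge0 ?exprn_ge0 //; lra.
Qed.

Theorem lemma2 (R : realFieldType) (beta n H m : nat) :
  (1 < beta)%N -> (0 < n)%N -> (n <= beta ^ H)%N -> (1 <= m)%N ->
  hirb_prob R beta n H (fun h => (H + 4 * n + m <= hirb_nodes h)%N)
    < (883%:R / 1000%:R) ^+ m.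
Proof.
move=> beta_gt1 n_gt0 _ _.
set k := (4 * n + m)%N.-1.
have sum_heights_ge (h : {ffun 'I_n -> 'I_H.+1}) :
    (H + 4 * n + m <= hirb_nodes h)%N = (k <= \sum_i h i)%N.
  by rewrite hirb_nodesE /k; apply/idP/idP; lia.
rewrite /hirb_prob (eq_bigl _ _ sum_heights_ge).
set P := \sum_(h | _) _.
have -> : P = (5/6) ^+ k * ((6/5) ^+ k * P).
  by rewrite mulrA -exprMn (_ : 5/6 * (6/5) = 1 :> R) ?expr1n ?mul1r //; field.
apply: le_lt_trans (chernoff_numeric_lt R m n_gt0).
apply: ler_wpM2l; first by rewrite exprn_ge0 //; lra.
apply: le_trans (chernoff_sum n (@nat_of_ord H.+1) k (height_pmf_ge0 R beta_gt1) _) _;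
  first lra.
apply: lerXn2r; rewrite ?nnegrE ?height_mgf_le //; last lra.
by apply: sumr_ge0 => j _; rewrite mulr_ge0 ?height_pmf_ge0 ?exprn_ge0 //; lra.
Qed.
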